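(* Consider the synchronous network with DP-MSR (parameter $f$) under the $f$-total malicious model, with $1+\frac{T^2}{2}\le\alpha T\le 2-\frac{T^2}{2}$, on an arbitrary digraph $\mathcal{G}$. For $k\ge 1$ let $\overline{x}[k]=\max_{i\notin\mathcal{M}}\max\{\hat{x}_i[k],\hat{x}_i[k-1]\}$ and $\underline{x}[k]=\min_{i\notin\mathcal{M}}\min\{\hat{x}_i[k],\hat{x}_i[k-1]\}$. Then, for every choice of initial conditions and malicious inputs, $\overline{x}[k]$ is nonincreasing and $\underline{x}[k]$ is nondecreasing in $k\ge 1$.
   Context: Graphs. A digraph $\mathcal{G}=(\mathcal{V},\mathcal{E})$ has node set $\mathcal{V}=\{1,\dots,n\}$ and edge set without self-loops; $(j,i)\in\mathcal{E}$ means node $i$ receives information from $j$; $\mathcal{N}_i=\{j:(j,i)\in\mathcal{E}\}$. Fix $\gamma>0$ and weights $a_{ij}\in[\gamma,1)$ for $(j,i)\in\mathcal{E}$ with $\sum_{j\in\mathcal{N}_i}a_{ij}\le 1$. Agents. Each agent $i$ has position $\hat{x}_i[k]$ and velocity $v_i[k]$ with $\hat{x}_i[k+1]=\hat{x}_i[k]+Tv_i[k]+\frac{T^2}{2}u_i[k]$, $v_i[k+1]=v_i[k]+Tu_i[k]$, $T>0$. Agents in the malicious set $\mathcal{M}$ use arbitrary inputs; normal agents use $u_i[k]=-\sum_{j\in\mathcal{N}_i}a_{ij}[k](\hat{x}_i[k]-\hat{x}_j[k])-\alpha v_i[k]$, $\alpha>0$, with $a_{ij}[k]$ from DP-MSR.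 DP-MSR algorithm (parameter $f$), synchronous: at each time $k$, each normal agent $i$ considers the relative positions $\hat{x}_j[k]-\hat{x}_i[k]$, $j\in\mathcal{N}_i$. If fewer than $f$ neighbors have relative value $\ge 0$, it ignores all of those; otherwise it ignores $f$ neighbors with the largest relative values. Similarly for values $\le 0$ and the $f$ smallest. Then $a_{ij}[k]=0$ for ignored neighbors and $a_{ij}[k]=a_{ij}$ otherwise. $f$-total malicious model: $|\mathcal{M}|\le f$. *)

(* R is an arbitrary real field (statement is purely order-algebraic). *)
From HB Require Import structures.
From mathcomp Require Import all_boot all_order all_algebra.
Set Implicit Arguments. Unset Strict Implicit. Unset Printing Implicit Defensive.
Import Order.TTheory GRing.Theory Num.Theory.
Local Open Scope ring_scope.

(* Convention: [E j i] means (j,i) is an edge: node i receives from j. *)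

(* DP-MSR "large" rule for agent i with relative values d j = x_j - x_i:
   Sl is the set of ignored neighbours on the large side. *)
Definition dpmsr_large (R : realFieldType) (n : nat) (E : rel 'I_n)
    (d : 'I_n -> R) (f : nat) (i : 'I_n) (Sl : {set 'I_n}) : Prop :=
  let P := [set j | E j i && (0 <= d j)] in
  if (#|P| < f)%N then Sl = P
  else [/\ Sl \subset P, #|Sl| = f &
         forall j j', j \in Sl -> E j' i -> j' \notin Sl -> d j' <= d j].

Definition dpmsr_small (R : realFieldType) (n : nat) (E : rel 'I_n)
    (d : 'I_n -> R) (f : nat) (i : 'I_n) (Ss : {set 'I_n}) : Prop :=
  let P := [set j | E j i && (d j <= 0)] in
  if (#|P| < f)%N then Ss = P
  else [/\ Ss \subset P, #|Ss| = f &
         forall j j', j \in Ss -> E j' i -> j' \notin Ss -> d j <= d j'].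

Definition dpmsr_ignored (R : realFieldType) (n : nat) (E : rel 'I_n)
    (x : 'I_n -> R) (f : nat) (i : 'I_n) (S : {set 'I_n}) : Prop :=
  let d := fun j => x j - x i in
  exists Sl Ss, [/\ dpmsr_large E d f i Sl, dpmsr_small E d f i Ss & S = Sl :|: Ss].

(* Upper / lower envelopes over normal agents (i \notin M) of the values at
   times k and k-1.  The seed i0 must be a normal agent, so that the big max
   is exactly the maximum over the (nonempty) normal set. *)
Definition xbar (R : realFieldType) (n : nat) (M : {set 'I_n}) (i0 : 'I_n)
    (x : nat -> 'I_n -> R) (k : nat) : R :=
  \big[Num.max/Num.max (x k i0) (x k.-1 i0)]_(i | i \notin M)
     Num.max (x k i) (x k.-1 i).

Definition xlow (R : realFieldType) (n : nat) (M : {set 'I_n}) (i0 : 'I_n)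
    (x : nat -> 'I_n -> R) (k : nat) : R :=
  \big[Num.min/Num.min (x k i0) (x k.-1 i0)]_(i | i \notin M)
     Num.min (x k i) (x k.-1 i).

From HB Require Import structures.
From mathcomp Require Import all_boot all_order all_algebra.
From mathcomp Require Import ring lra.

Set Implicit Arguments.
Unset Strict Implicit.
Unset Printing Implicit Defensive.
Import Order.TTheory GRing.Theory Num.Theory.
Local Open Scope ring_scope.

(* Substituting the control law twice, a normal agent's next position is a
   combination of its last two positions and of the values it kept at the last
   two steps; the gain condition on [alpha * T] makes all coefficients of this
   combination nonnegative, and they sum to one.  DP-MSR only keeps values lying
   between values of normal agents: a kept malicious value above the agent's own
   is dominated by one of the [f] removed larger values, at least one of which is
   normal since [|M| <= f].  Hence the next position stays below the maximum of
   the normal positions at the last two steps.  The lower envelope is the upper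
   envelope of the negated trajectories. *)

Lemma second_order_step_le (R : realFieldType) (T alpha s1 s0 W1 W0 : R)
    (x2 x1 x0 v1 v0 u1 u0 B : R) :
  1 + T ^+ 2 / 2%:R <= alpha * T -> alpha * T <= 2%:R - T ^+ 2 / 2%:R ->
  0 <= s1 <= 1 -> 0 <= s0 <= 1 -> W1 <= s1 * B -> W0 <= s0 * B ->
  x2 = x1 + T * v1 + T ^+ 2 / 2%:R * u1 -> v1 = v0 + T * u0 ->
  x1 = x0 + T * v0 + T ^+ 2 / 2%:R * u0 ->
  u1 = W1 - s1 * x1 - alpha * v1 -> u0 = W0 - s0 * x0 - alpha * v0 ->
  x1 <= B -> x0 <= B -> x2 <= B.
Proof.
move=> gain_lb gain_ub /andP[s1_ge0 s1_le1] /andP[s0_ge0 s0_le1] W1_le W0_le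
  e2 ev e1 eu1 eu0 x1_le x0_le.
set c := T ^+ 2 / 2%:R in gain_lb gain_ub e2 e1.
have key : B - x2 = (2%:R - alpha * T - c * s1) * (B - x1)
    + (alpha * T - 1 - c * s0) * (B - x0) + c * (s1 * B - W1) + c * (s0 * B - W0).
  by rewrite e2 eu1 ev e1 eu0 /c; field.
have c_ge0 : 0 <= c by rewrite divr_ge0 ?sqr_ge0 ?ler0n.
have cs1_le : c * s1 <= c by rewrite ler_piMr.
have cs0_le : c * s0 <= c by rewrite ler_piMr.
rewrite -subr_ge0 key !addr_ge0 // mulr_ge0 // ?subr_ge0 //; lra.
Qed.

Lemma sum_mulrBr (R : pzRingType) (I : finType) (P : pred I) (w y : I -> R) (z : R) :
  \sum_(j | P j) w j * (z - y j) = (\sum_(j | P j) w j) * z - \sum_(j | P j) w j * y j.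
Proof. by rewrite mulr_suml -sumrB; apply: eq_bigr => j _; rewrite mulrBr. Qed.

Lemma sum_weighted_le (R : numDomainType) (I : finType) (P : pred I) (w y : I -> R) B :
  (forall j, P j -> 0 <= w j) -> (forall j, P j -> y j <= B) ->
  \sum_(j | P j) w j * y j <= (\sum_(j | P j) w j) * B.
Proof.
by move=> w_ge0 y_le; rewrite mulr_suml; apply: ler_sum => j Pj; rewrite ler_wpM2l ?w_ge0 ?y_le.
Qed.

Lemma exists_notin_of_card_le (T : finType) (A M : {set T}) (j : T) :
  (#|M| <= #|A|)%N -> j \in M -> j \notin A -> exists2 p, p \in A & p \notin M.
Proof.
move=> card_le jM jA; apply/subsetPn/negP => sAM.
have : j |: A \subset M by rewrite subUset sub1set jM.
by move/subset_leq_card; rewrite cardsU1 jA add1n ltnNge card_le.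
Qed.

Section DpmsrRule.
Variables (R : realFieldType) (n : nat) (E : rel 'I_n) (f : nat) (i : 'I_n).

Lemma dpmsr_large_kept_dominated (d : 'I_n -> R) (Sl M : {set 'I_n}) j :
  dpmsr_large E d f i Sl -> (#|M| <= f)%N ->
  E j i -> 0 <= d j -> j \in M -> j \notin Sl -> exists2 p, p \notin M & d j <= d p.
Proof.
rewrite /dpmsr_large /=; case: ifP => _.
  by move=> -> _ Eji dj_ge0 _; rewrite inE Eji dj_ge0.
case=> _ card_Sl d_le card_M Eji _ jM jSl.
have [|p pSl pM] := exists_notin_of_card_le _ jM jSl; first by rewrite card_Sl.
by exists p; rewrite // d_le.
Qed.

Lemma dpmsr_kept_le (y : 'I_n -> R) (S M : {set 'I_n}) B j :
  dpmsr_ignored E y f i S -> (#|M| <= f)%N -> i \notin M ->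
  (forall p, p \notin M -> y p <= B) -> E j i -> j \notin S -> y j <= B.
Proof.
move=> [Sl [Ss [large _ ->]]] card_M iM y_le Eji; rewrite inE negb_or => /andP[jSl _].
case jM: (j \in M); last by rewrite y_le ?jM.
have [dj_ge0|] := leP 0 (y j - y i); last by rewrite subr_lt0 => /ltW/le_trans->; rewrite ?y_le.
have [p pM] := dpmsr_large_kept_dominated large card_M Eji dj_ge0 jM jSl.
by rewrite lerD2r => /le_trans->; rewrite ?y_le.
Qed.

Lemma dpmsr_small_opp (d d' : 'I_n -> R) S : (forall j, d' j = - d j) ->
  dpmsr_small E d f i S -> dpmsr_large E d' f i S.
Proof.
move=> d'E; rewrite /dpmsr_small /dpmsr_large /=.
have -> : [set j | E j i && (0 <= d' j)] = [set j | E j i && (d j <= 0)].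
  by apply/setP => j; rewrite !inE d'E oppr_ge0.
case: ifP => // _ [sub card d_ge]; split=> // j j' jS Ej'i j'S.
by rewrite !d'E lerN2 d_ge.
Qed.

Lemma dpmsr_large_opp (d d' : 'I_n -> R) S : (forall j, d' j = - d j) ->
  dpmsr_large E d f i S -> dpmsr_small E d' f i S.
Proof.
move=> d'E; rewrite /dpmsr_small /dpmsr_large /=.
have -> : [set j | E j i && (d' j <= 0)] = [set j | E j i && (0 <= d j)].
  by apply/setP => j; rewrite !inE d'E oppr_le0.
case: ifP => // _ [sub card d_le]; split=> // j j' jS Ej'i j'S.
by rewrite !d'E lerN2 d_le.
Qed.

Lemma dpmsr_ignored_opp (y : 'I_n -> R) S :
  dpmsr_ignored E y f i S -> dpmsr_ignored E (fun j => - y j) f i S.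
Proof.
have oppE j : - y j - - y i = - (y j - y i) by rewrite opprD.
move=> [Sl [Ss [large small ->]]]; exists Ss, Sl; split; last exact: setUC.
- exact: dpmsr_small_opp oppE small.
- exact: dpmsr_large_opp oppE large.
Qed.

End DpmsrRule.

Lemma xlow_opp (R : realFieldType) (n : nat) (M : {set 'I_n}) (i0 : 'I_n)
    (x : nat -> 'I_n -> R) k :
  xlow M i0 x k = - xbar M i0 (fun k i => - x k i) k.
Proof.
rewrite /xlow /xbar (big_morph -%R (@oppr_max R) (erefl _)) oppr_max !opprK.
by apply: eq_bigr => i _; rewrite oppr_max !opprK.
Qed.

Section UpperEnvelope.
Variables (R : realFieldType) (n : nat) (E : rel 'I_n) (a : 'I_n -> 'I_n -> R).
Variables (T alpha : R) (f : nat) (M : {set 'I_n}) (i0 : 'I_n).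
Variables (x v u : nat -> 'I_n -> R).
Hypothesis a_ge0 : forall i j, E j i -> 0 <= a i j.
Hypothesis a_sum_le1 : forall i, \sum_(j | E j i) a i j <= 1.
Hypothesis gain_lb : 1 + T ^+ 2 / 2%:R <= alpha * T.
Hypothesis gain_ub : alpha * T <= 2%:R - T ^+ 2 / 2%:R.
Hypothesis card_M : (#|M| <= f)%N.
Hypothesis i0_normal : i0 \notin M.
Hypothesis x_step : forall k i, x k.+1 i = x k i + T * v k i + T ^+ 2 / 2%:R * u k i.
Hypothesis v_step : forall k i, v k.+1 i = v k i + T * u k i.
Hypothesis u_dpmsr : forall k i, i \notin M ->
  exists S : {set 'I_n}, dpmsr_ignored E (x k) f i S /\
    u k i = - (\sum_(j | E j i && (j \notin S)) a i j * (x k i - x k j)) - alpha * v k i.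

Lemma le_xbar k p : p \notin M -> x k p <= xbar M i0 x k /\ x k.-1 p <= xbar M i0 x k.
Proof.
move=> pM; have := le_bigmax_cond (Num.max (x k i0) (x k.-1 i0))
  (P := fun q => q \notin M) (fun q => Num.max (x k q) (x k.-1 q)) pM.
by rewrite ge_max => /andP.
Qed.

Lemma xbar_le k B : (forall p, p \notin M -> x k p <= B /\ x k.-1 p <= B) ->
  xbar M i0 x k <= B.
Proof.
move=> x_le; apply: bigmax_le => [|p /x_le[xk_le xk1_le]]; rewrite ge_max; last first.
  by rewrite xk_le xk1_le.
by have [-> ->] := x_le i0 i0_normal.
Qed.

Lemma kept_weight_bounds i (S : {set 'I_n}) :
  0 <= \sum_(j | E j i && (j \notin S)) a i j <= 1.
Proof.
apply/andP; split; first by apply: sumr_ge0 => j /andP[/a_ge0].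
apply: le_trans (a_sum_le1 i); rewrite big_mkcondr /=.
by apply: ler_sum => j /a_ge0; case: (j \notin S).
Qed.

Lemma kept_weighted_sum_le k i S B : i \notin M -> dpmsr_ignored E (x k) f i S ->
  (forall p, p \notin M -> x k p <= B) ->
  \sum_(j | E j i && (j \notin S)) a i j * x k j
    <= (\sum_(j | E j i && (j \notin S)) a i j) * B.
Proof.
move=> iM ign x_le; apply: sum_weighted_le => j /andP[Eji jS]; first exact: a_ge0.
exact: dpmsr_kept_le ign card_M iM x_le Eji jS.
Qed.

Lemma normal_le_xbar k i : i \notin M -> x k.+2 i <= xbar M i0 x k.+1.
Proof.
move=> iM; set B := xbar M i0 x k.+1.
have x1_le p : p \notin M -> x k.+1 p <= B by case/(le_xbar k.+1).
have x0_le p : p \notin M -> x k p <= B by case/(le_xbar k.+1).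
have [S1 [ign1 eu1]] := u_dpmsr k.+1 iM.
have [S0 [ign0 eu0]] := u_dpmsr k iM.
rewrite sum_mulrBr opprB in eu1; rewrite sum_mulrBr opprB in eu0.
apply: (second_order_step_le gain_lb gain_ub (kept_weight_bounds i S1)
  (kept_weight_bounds i S0) (kept_weighted_sum_le iM ign1 x1_le)
  (kept_weighted_sum_le iM ign0 x0_le) (x_step _ _) (v_step _ _) (x_step _ _) eu1 eu0);
  by [apply: x1_le | apply: x0_le].
Qed.

Lemma xbar_nonincreasing k l : (1 <= k)%N -> (k <= l)%N -> xbar M i0 x l <= xbar M i0 x k.
Proof.
case: k l => [|k] [|l] // _ le_kl.
have step m : xbar M i0 x m.+2 <= xbar M i0 x m.+1.
  by apply: xbar_le => p pM; split; [exact: normal_le_xbar | case: (le_xbar m.+1 pM)].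
exact: (Order.NatMonotonyTheory.nonincnP (f := fun m => xbar M i0 x m.+1) step).
Qed.

End UpperEnvelope.

Theorem mainTheorem3 (R : realFieldType) (n : nat) (E : rel 'I_n)
    (gamma : R) (a : 'I_n -> 'I_n -> R) (T alpha : R) (f : nat)
    (M : {set 'I_n}) (i0 : 'I_n)
    (x v u : nat -> 'I_n -> R) :
  (forall i, ~~ E i i) ->
  0 < gamma ->
  (forall i j, E j i -> gamma <= a i j /\ a i j < 1) ->
  (forall i, \sum_(j | E j i) a i j <= 1) ->
  0 < T -> 0 < alpha ->
  1 + T ^+ 2 / 2%:R <= alpha * T -> alpha * T <= 2%:R - T ^+ 2 / 2%:R ->
  (#|M| <= f)%N ->
  i0 \notin M ->
  (forall k i, x k.+1 i = x k i + T * v k i + T ^+ 2 / 2%:R * u k i) ->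
  (forall k i, v k.+1 i = v k i + T * u k i) ->
  (forall k i, i \notin M ->
     exists S : {set 'I_n}, dpmsr_ignored E (x k) f i S /\
       u k i = - (\sum_(j | E j i && (j \notin S)) a i j * (x k i - x k j))
               - alpha * v k i) ->
  forall k l, (1 <= k)%N -> (k <= l)%N ->
    xbar M i0 x l <= xbar M i0 x k /\ xlow M i0 x k <= xlow M i0 x l.
Proof.
move=> _ gamma_gt0 a_bounds a_sum_le1 _ _ gain_lb gain_ub card_M i0_normal
  x_step v_step u_dpmsr k l k_ge1 le_kl.
have a_ge0 i j : E j i -> 0 <= a i j.
  by case/a_bounds => /(lt_le_trans gamma_gt0)/ltW.
have xbar_mono := xbar_nonincreasing a_ge0 a_sum_le1 gain_lb gain_ub card_M i0_normal.
split; first exact: xbar_mono x_step v_step u_dpmsr _ _ k_ge1 le_kl.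
rewrite !xlow_opp lerN2.
apply: (xbar_mono _ (fun k i => - v k i) (fun k i => - u k i)) => // [k' i | k' i | k' i iM].
- by rewrite x_step !opprD !mulrN.
- by rewrite v_step opprD mulrN.
- have [S [ign ->]] := u_dpmsr k' i iM; exists S; split; first exact: dpmsr_ignored_opp.
  have -> : \sum_(j | E j i && (j \notin S)) a i j * (- x k' i - - x k' j)
      = - \sum_(j | E j i && (j \notin S)) a i j * (x k' i - x k' j).
    by rewrite -sumrN; apply: eq_bigr => j _; ring.
  ring.
Qed.
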